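(* Let $P$ be a finite poset and $R$ a commutative unital ring. Then $$Z^3_2(P,R)=Z^3_1(P,R)^2=\mathrm{span}_R\{e_{xxy}+e_{xyy}: x,y\in P,\ l(x,y)=1\}\oplus J^3_2(P,R).$$ In particular, $Z^3_2(P,R)$ is a subalgebra of $I^3(P,R)$.
   Context: For a finite poset $P$, $P^3_\le=\{(x,y,z)\in P^3: x\le y\le z\}$, and $I^3(P,R)$ is the $R$-module of functions $f:P^3_\le\to R$ with multiplication $(fg)(x_1,x_2,x_3)=\sum f(x_1,y_1,y_2)g(y_1,y_2,x_3)$ over all $x_1\le y_1\le x_2\le y_2\le x_3$. For $x\le y\le z$, $e_{xyz}$ is the function equal to $1$ at $(x,y,z)$ and $0$ elsewhere. For $a\le b$, $l(a,b)$ is the maximum of $|C|-1$ over chains $C$ in the interval $[a,b]$. $J^3_k(P,R)=\{f: f(x_1,x_2,x_3)=0 \text{ whenever } l(x_1,x_3)<k\}$. $[f,g]=fg-gf$; for subsets $U,V$, $[U,V]$ (resp. $UV$) is the $R$-submodule spanned by all $[u,v]$ (resp. $uv$), $u\in U,v\in V$, and $U^2=UU$. $Z^3_1(P,R)=J^3_1(P,R)$, $Z^3_2(P,R)=[Z^3_1(P,R),Z^3_1(P,R)]$. *)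

From HB Require Import structures.
From mathcomp Require Import all_boot all_order all_algebra.
Set Implicit Arguments. Unset Strict Implicit. Unset Printing Implicit Defensive.
Import Order.TTheory GRing.Theory.
Local Open Scope order_scope.

Section Incidence3.
Variables (d : Order.disp_t) (P : finPOrderType d) (R : comNzRingType).

(* Elements of I^3(P,R) are represented as functions on P^3 that vanish
   outside P^3_<= . *)
Local Notation fn3 := {ffun P * P * P -> R^o}.

Definition inI3 (f : fn3) : Prop :=
  forall x y z : P, ~~ ((x <= y) && (y <= z)) -> f (x, y, z) = 0%R.

Definition mul3 (f g : fn3) : fn3 :=
  [ffun t : P * P * P => let: (x1, x2, x3) := t in
     (\sum_(y1 : P) \sum_(y2 : P)
        if [&& (x1 <= y1)%O, (y1 <= x2)%O, (x2 <= y2)%O & (y2 <= x3)%O]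
        then f (x1, y1, y2) * g (y1, y2, x3) else 0)%R].

Definition e3 (x y z : P) : fn3 :=
  [ffun t : P * P * P => if t == (x, y, z) then 1%R else 0%R].

Definition is_chain (C : {set P}) : bool :=
  [forall u in C, forall v in C, (u <= v) || (v <= u)].

Definition len (a b : P) : nat :=
  \max_(C : {set P} | is_chain C && (C \subset [set z | (a <= z) && (z <= b)]))
     (#|C|).-1.

Definition J3 (k : nat) (f : fn3) : Prop :=
  inI3 f /\ forall x1 x2 x3 : P, (len x1 x3 < k)%N -> f (x1, x2, x3) = 0%R.

Definition span3 (S : fn3 -> Prop) (v : fn3) : Prop :=
  exists (n : nat) (c : 'I_n -> R) (g : 'I_n -> fn3),
    (forall i, S (g i)) /\ v = (\sum_(i < n) c i *: g i)%R.

Definition Z1 := J3 1.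

Definition Z2 : fn3 -> Prop :=
  span3 (fun h => exists f g, Z1 f /\ Z1 g /\ h = (mul3 f g - mul3 g f)%R).

Definition Z1sq : fn3 -> Prop :=
  span3 (fun h => exists f g, Z1 f /\ Z1 g /\ h = mul3 f g).

Definition Egen : fn3 -> Prop :=
  span3 (fun h => exists x y : P, [/\ x <= y, len x y = 1%N &
                                     h = (e3 x x y + e3 x y y)%R]).

End Incidence3.

Notation fn3 P R := {ffun (P * P * P)%type -> R^o}.

From HB Require Import structures.
From mathcomp Require Import all_boot all_order all_algebra.
Import Order.TTheory GRing.Theory.
Set Implicit Arguments. Unset Strict Implicit. Unset Printing Implicit Defensive.

(* Z^3_1 is spanned by the e_xyz with x <= y <= z and x < z, and e_abc e_a'b'c'
   vanishes unless (a', b') = (b, c), in which case it is the sum of the e_axc'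
   with b <= x <= c.  Hence Z^3_1^2 is spanned by the products e_abc e_bce of
   basis elements of Z^3_1, and each of them is a commutator because the
   product in the other order vanishes (a < c); this gives Z^3_2 = Z^3_1^2,
   and Z^3_2 is contained in Z^3_1.  Such a product lies in J^3_2 unless l(a,e) = 1, where it is
   e_aae + e_aee.  Conversely, if a < u < c then
     e_aau e_auc = e_aac + sum_(a < x <= u) e_axc,
     e_auc e_ucc = e_acc + sum_(u <= x < c) e_axc,
     e_axx e_xxc = e_axc  for a < x < c,
   so every e_abc with l(a,c) >= 2, hence J^3_2, lies in the span of the
   products. *)

Section Incidence3Algebra.
Variables (d : Order.disp_t) (P : finPOrderType d) (R : comNzRingType).
Local Notation F := (fn3 P R).
Local Notation E := (@e3 d P R).
Local Open Scope ring_scope.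
Local Open Scope order_scope.
Implicit Types (f g h : F) (a b c e u x : P).

Definition submod3 (Q : F -> Prop) : Prop :=
  [/\ Q 0, forall f g, Q f -> Q g -> Q (f + g) & forall k f, Q f -> Q (k *: f)].

Lemma submod3B Q f g : submod3 Q -> Q f -> Q g -> Q (f - g).
Proof. by case=> _ QD QZ Qf Qg; rewrite -scaleN1r; apply/QD/QZ. Qed.

Lemma submod3_sum Q (I : finType) (p : pred I) (G : I -> F) :
  submod3 Q -> (forall i, p i -> Q (G i)) -> Q (\sum_(i | p i) G i).
Proof. by case=> Q0 QD _ QG; elim/big_ind: _. Qed.

Lemma span3_submod (S : F -> Prop) : submod3 (span3 S).
Proof.
split.
- by exists 0%N, (fun _ => 0), (fun _ => 0); split; [case | rewrite big_ord0].
- move=> _ _ [m [a [G [SG ->]]]] [n [b [H [SH ->]]]].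
  exists (m + n)%N, (fun i => match split i with inl j => a j | inr j => b j end),
    (fun i => match split i with inl j => G j | inr j => H j end).
  split; first by move=> i; case: (split i).
  rewrite big_split_ord /=; congr (_ + _); apply: eq_bigr => i _.
    by rewrite (unsplitK (inl i : 'I_m + 'I_n)).
  by rewrite (unsplitK (inr i : 'I_m + 'I_n)).
- move=> k _ [n [a [G [SG ->]]]]; exists n, (fun i => k * a i), G; split => //.
  by rewrite scaler_sumr; apply: eq_bigr => i _; rewrite scalerA.
Qed.

Lemma span3_gen (S : F -> Prop) h : S h -> span3 S h.
Proof.
by exists 1%N, (fun _ => 1), (fun _ => h); split; rewrite // big_ord1 scale1r.
Qed.

Lemma span3_ind (S Q : F -> Prop) : submod3 Q -> (forall h, S h -> Q h) ->
  forall f, span3 S f -> Q f.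
Proof.
move=> Qsub SQ _ [n [a [G [SG ->]]]].
by apply: submod3_sum => // i _; case: Qsub => _ _; apply; apply: SQ.
Qed.

Lemma span3_sub (S T : F -> Prop) :
  (forall h, S h -> span3 T h) -> forall f, span3 S f -> span3 T f.
Proof. by move=> ST; apply: span3_ind ST; apply: span3_submod. Qed.

Lemma J3_submod n : submod3 (@J3 d P R n).
Proof.
split.
- by split=> x y z _; rewrite ffunE.
- move=> f g [If Jf] [Ig Jg]; split=> x y z H; rewrite ffunE.
    by rewrite If ?Ig ?addr0.
  by rewrite Jf ?Jg ?addr0.
- move=> k f [If Jf]; split=> x y z H; rewrite ffunE.
    by rewrite If ?scaler0.
  by rewrite Jf ?scaler0.
Qed.

Lemma Egen_submod : submod3 (@Egen d P R).
Proof. exact: span3_submod. Qed.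

Lemma Z2_submod : submod3 (@Z2 d P R).
Proof. exact: span3_submod. Qed.

Lemma mul3Dl f g h : mul3 (f + g) h = mul3 f h + mul3 g h.
Proof.
apply/ffunP => -[[x1 x2] x3]; rewrite !ffunE -big_split; apply: eq_bigr => y1 _.
rewrite -big_split; apply: eq_bigr => y2 _; rewrite !ffunE.
by case: ifP; rewrite /= ?mulrDl ?addr0.
Qed.

Lemma mul3Dr f g h : mul3 f (g + h) = mul3 f g + mul3 f h.
Proof.
apply/ffunP => -[[x1 x2] x3]; rewrite !ffunE -big_split; apply: eq_bigr => y1 _.
rewrite -big_split; apply: eq_bigr => y2 _; rewrite !ffunE.
by case: ifP; rewrite /= ?mulrDr ?addr0.
Qed.

Lemma mul3Zl k f g : mul3 (k *: f) g = k *: mul3 f g.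
Proof.
apply/ffunP => -[[x1 x2] x3]; rewrite !ffunE scaler_sumr; apply: eq_bigr => y1 _.
rewrite scaler_sumr; apply: eq_bigr => y2 _; rewrite !ffunE.
by case: ifP; rewrite ?scaler0 // scalerAl.
Qed.

Lemma mul3Zr k f g : mul3 f (k *: g) = k *: mul3 f g.
Proof.
apply/ffunP => -[[x1 x2] x3]; rewrite !ffunE scaler_sumr; apply: eq_bigr => y1 _.
rewrite scaler_sumr; apply: eq_bigr => y2 _; rewrite !ffunE.
by case: ifP; rewrite ?scaler0 // scalerAr.
Qed.

Lemma mul3_suml (I : finType) (G : I -> F) h :
  mul3 (\sum_i G i) h = \sum_i mul3 (G i) h.
Proof.
have mul3_0l : mul3 0 h = 0 by rewrite -[X in mul3 X _](scale0r 0) mul3Zl scale0r.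
exact: (big_morph (fun f => mul3 f h) (fun f g => mul3Dl f g h) mul3_0l).
Qed.

Lemma mul3_sumr (I : finType) (G : I -> F) f :
  mul3 f (\sum_i G i) = \sum_i mul3 f (G i).
Proof.
have mul3_0r : mul3 f 0 = 0 by rewrite -[X in mul3 _ X](scale0r 0) mul3Zr scale0r.
exact: (big_morph (fun g => mul3 f g) (mul3Dr f) mul3_0r).
Qed.

Lemma e3_decomp f : f = \sum_(t : P * P * P) f t *: E t.1.1 t.1.2 t.2.
Proof.
apply/ffunP => t; rewrite sum_ffunE (bigD1 t) //= big1 => [|s nst].
  by case: t => [[x y] z]; rewrite !ffunE eqxx addr0 /GRing.scale /= mulr1.
by case: s nst => [[x y] z] nst; rewrite !ffunE eq_sym (negbTE nst) scaler0.
Qed.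

Lemma sum_e3E a c (p : pred P) x1 x2 x3 :
  (\sum_(x | p x) E a x c) (x1, x2, x3) = (if [&& x1 == a, x3 == c & p x2] then 1 else 0).
Proof.
rewrite sum_ffunE; under eq_bigr => x _ do rewrite ffunE !xpair_eqE.
have [_|_] := eqVneq x1 a; have [_|_] := eqVneq x3 c; rewrite /=;
  try by rewrite big1 // => x _; rewrite andbF.
have [px2|npx2] := boolP (p x2).
  rewrite (bigD1 x2) //= eqxx big1 ?addr0 // => x /andP[_ nx].
  by rewrite eq_sym (negbTE nx).
by rewrite big1 // => x px; case: eqVneq => // ex; rewrite ex px in npx2.
Qed.

Lemma mul3_e3 a b c a' b' c' :
  mul3 (E a b c) (E a' b' c') =
  if [&& a' == b, b' == c, a <= b & c <= c'] then \sum_(x | b <= x <= c) E a x c' else 0.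
Proof.
apply/ffunP => -[[x1 x2] x3]; rewrite ffunE /= (bigD1 b) //=.
rewrite [X in _ + X]big1 => [|y1 ny1]; last first.
  by apply: big1 => y2 _; rewrite !ffunE !xpair_eqE (negbTE ny1) andbF mul0r if_same.
rewrite addr0 (bigD1 c) //= [X in _ + X]big1 => [|y2 ny2]; last first.
  by rewrite !ffunE !xpair_eqE (negbTE ny2) andbF mul0r if_same.
rewrite addr0 !ffunE !xpair_eqE !eqxx !andbT [b == a']eq_sym [c == b']eq_sym.
case: (a' == b); case: (b' == c); rewrite /= ?mulr0 ?if_same ?ffunE //.
rewrite (fun_if (fun f : F => f (x1, x2, x3))) sum_e3E ffunE.
case: (x1 =P a) => [->|_]; case: (x3 =P c') => [->|_];
  rewrite ?mulr0 ?mul0r ?if_same ?andbF /= ?if_same // mulr1.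
by case: (a <= b); case: (b <= x2); case: (x2 <= c); case: (c <= c').
Qed.

Lemma chainP (C : {set P}) :
  reflect {in C &, forall u v, (u <= v) || (v <= u)} (is_chain C).
Proof.
apply: (iffP forallP) => [ch u v uC vC | ch u].
  by have /implyP/(_ uC)/forallP/(_ v)/implyP := ch u; apply.
by apply/implyP => uC; apply/forallP => v; apply/implyP; apply: ch.
Qed.

Lemma len_ge_chain a c (C : {set P}) :
  is_chain C -> C \subset [set z | a <= z <= c] -> (#|C|.-1 <= len a c)%N.
Proof. by move=> ch sub; apply: leq_bigmax_cond; rewrite ch. Qed.

Lemma len_le_card a c : (len a c <= #|[set z | (a <= z <= c)%O]|.-1)%N.
Proof.
by apply/bigmax_leqP => C /andP[_ /subset_leq_card /(leq_sub2r 1)]; rewrite !subn1.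
Qed.

Lemma lenxx a : len a a = 0%N.
Proof.
apply/eqP; rewrite -leqn0; apply: leq_trans (len_le_card a a) _.
suff -> : [set z | a <= z <= a] = [set a] by rewrite cards1.
by apply/setP => z; rewrite !inE -eq_le eq_sym.
Qed.

Lemma len_gt0 a c : a < c -> (0 < len a c)%N.
Proof.
move=> ac; apply: leq_trans (len_ge_chain (C := [set a; c]) _ _).
- by rewrite cards2 (lt_eqF ac).
- apply/chainP => u v; rewrite !inE => /orP[]/eqP-> /orP[]/eqP->;
  by rewrite ?lexx ?(ltW ac) ?orbT.
- by apply/subsetP => z; rewrite !inE => /orP[]/eqP->; rewrite ?lexx ?(ltW ac).
Qed.

Lemma len_gt1P a c : reflect (exists u, a < u < c) (1 < len a c)%N.
Proof.
apply: (iffP idP) => [lt1 | [u /andP[au uc]]].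
  apply/existsP; move: lt1; apply: contraLR => /existsPn between; rewrite -leqNgt.
  have sub : [set z | (a <= z <= c)%O] \subset [set a; c].
    apply/subsetP => z; rewrite !inE => /andP[az zc].
    by have := between z; rewrite !lt_def az zc !andbT negb_and !negbK ![_ == z]eq_sym.
  apply: leq_trans (len_le_card a c) _; rewrite -subn1 leq_subLR.
  by apply: leq_trans (subset_leq_card sub) _; rewrite cards2; case: (a != c).
have ac := lt_trans au uc.
apply: leq_trans (len_ge_chain (C := a |: [set u; c]) _ _).
- by rewrite cardsU1 cards2 !inE (lt_eqF au) (lt_eqF uc) (lt_eqF ac).
- apply/chainP => x y; rewrite !inE => /or3P[]/eqP-> /or3P[]/eqP->;
  by rewrite ?lexx ?(ltW au) ?(ltW uc) ?(ltW ac) ?orbT.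
- apply/subsetP => z; rewrite !inE => /or3P[]/eqP->;
  by rewrite ?lexx ?(ltW au) ?(ltW uc) ?(ltW ac).
Qed.

Lemma e3_J3 n a b c : a <= b -> b <= c -> (n <= len a c)%N -> J3 n (E a b c).
Proof.
move=> ab bc nac; split=> x y z; rewrite ffunE; case: eqP => // -[-> ey ->].
  by rewrite ey ab bc.
by rewrite ltnNge nac.
Qed.

Lemma sum_e3_J3 n a c (p : pred P) :
  (forall x, p x -> a <= x <= c) -> (n <= len a c)%N -> J3 n (\sum_(x | p x) E a x c).
Proof.
move=> pac nac; apply: submod3_sum => [|x /pac /andP[ax xc]]; first exact: J3_submod.
exact: e3_J3.
Qed.

Lemma Z1_support f x y z : Z1 f -> f (x, y, z) != 0 -> [/\ x <= y, y <= z & x < z].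
Proof.
case=> If Jf nz; have /andP[xy yz] : (x <= y) && (y <= z).
  by apply: contraNT nz => /If ->.
split=> //; rewrite lt_neqAle (le_trans xy yz) andbT.
by apply: contraNneq nz => exz; apply/eqP/Jf; rewrite exz lenxx.
Qed.

Lemma mul3_e3_chain a b c e : a <= b -> c <= e ->
  mul3 (E a b c) (E b c e) = \sum_(x | b <= x <= c) E a x e.
Proof. by move=> ab ce; rewrite mul3_e3 !eqxx ab ce. Qed.

Lemma mul3_e3_mismatch a b c a' b' c' : (a', b') != (b, c) ->
  mul3 (E a b c) (E a' b' c') = 0.
Proof. by rewrite mul3_e3 xpair_eqE; case: (a' == b); case: (b' == c). Qed.

Definition e3_prod h : Prop := exists a b c e,
  [/\ a <= b, b <= c, c <= e, a < c & b < e] /\ h = mul3 (E a b c) (E b c e).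

Lemma Z1_mul_span f g : Z1 f -> Z1 g -> span3 e3_prod (mul3 f g).
Proof.
move=> Zf Zg; have spans := span3_submod e3_prod; have [span0 _ spanZ] := spans.
rewrite [f]e3_decomp [g]e3_decomp mul3_suml.
apply: (submod3_sum spans) => -[[a b] c] _; rewrite mul3Zl mul3_sumr scaler_sumr.
apply: (submod3_sum spans) => -[[a' b'] c'] _ /=; rewrite mul3Zr.
have [->|nf] := eqVneq (f (a, b, c)) 0; first by rewrite scale0r.
have [->|ng] := eqVneq (g (a', b', c')) 0; first by rewrite scale0r; apply: spanZ.
apply/spanZ/spanZ; have [[ea eb]|mis] := eqVneq (a', b') (b, c); last first.
  by rewrite mul3_e3_mismatch.
subst a' b'; have [ab bc ac] := Z1_support Zf nf; have [_ ce be] := Z1_support Zg ng.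
by apply: span3_gen; exists a, b, c, c'.
Qed.

Lemma e3_prod_Z2 h : e3_prod h -> Z2 h.
Proof.
case=> a [b [c [e [[ab bc ce ac be] ->]]]].
apply: span3_gen; exists (E a b c), (E b c e); split; [|split].
- exact: e3_J3 ab bc (len_gt0 ac).
- exact: e3_J3 bc ce (len_gt0 be).
- by rewrite (@mul3_e3_mismatch b c e) ?subr0 // xpair_eqE (lt_eqF ac).
Qed.

Lemma span_e3_prod_Z1 f : span3 e3_prod f -> Z1 f.
Proof.
apply: span3_ind; first exact: J3_submod.
move=> _ [a [b [c [e [[ab bc ce ac be] ->]]]]]; rewrite mul3_e3_chain //.
apply: sum_e3_J3 => [x /andP[bx xc]|]; first by rewrite (le_trans ab bx) (le_trans xc ce).
exact/len_gt0/(lt_le_trans ac ce).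
Qed.

Lemma span_e3_inner a x c : a < x -> x < c -> span3 e3_prod (E a x c).
Proof.
move=> ax xc; apply: span3_gen; exists a, x, x, c.
split; first by split; rewrite ?lexx ?(ltW ax) ?(ltW xc).
rewrite mul3_e3_chain ?ltW // (eq_bigl (pred1 x)) ?big_pred1_eq // => y.
by rewrite /= eq_le andbC.
Qed.

Lemma e3_span a b c : a <= b -> b <= c -> (1 < len a c)%N -> span3 e3_prod (E a b c).
Proof.
move=> ab bc /len_gt1P[u /andP[au uc]]; have spans := span3_submod e3_prod.
have ac := lt_trans au uc.
have [-> {ab}|nba] := eqVneq b a.
  have := mul3_e3_chain (lexx a) (ltW uc).
  rewrite (bigD1 a) ?lexx ?(ltW au) //= => /eqP; rewrite -subr_eq => /eqP <-.
  apply: (submod3B spans).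
    apply: span3_gen; exists a, a, u, c.
    by split; first split; rewrite ?lexx ?(ltW au) ?(ltW uc).
  apply: (submod3_sum spans) => x /andP[/andP[ax xu] nxa].
  by apply: span_e3_inner (le_lt_trans xu uc); rewrite lt_neqAle eq_sym nxa.
have [-> {bc}|nbc] := eqVneq b c.
  have := mul3_e3_chain (ltW au) (lexx c).
  rewrite (bigD1 c) ?lexx ?(ltW uc) //= => /eqP; rewrite -subr_eq => /eqP <-.
  apply: (submod3B spans).
    apply: span3_gen; exists a, u, c, c.
    by split; first split; rewrite ?lexx ?(ltW au) ?(ltW uc).
  apply: (submod3_sum spans) => x /andP[/andP[ux xc] nxc].
  by apply: span_e3_inner (lt_le_trans au ux) _; rewrite lt_neqAle nxc.
by apply: span_e3_inner; rewrite lt_neqAle ?ab ?bc ?nbc // eq_sym nba.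
Qed.

Lemma J2_span f : J3 2 f -> span3 e3_prod f.
Proof.
case=> If Jf; have [span0 _ spanZ] := span3_submod e3_prod.
rewrite [f]e3_decomp; apply: submod3_sum => [|[[a b] c] _ /=]; first exact: span3_submod.
have [->|nf] := eqVneq (f (a, b, c)) 0; first by rewrite scale0r.
apply: spanZ; have /andP[ab bc] : a <= b <= c by apply: contraNT nf => /If ->.
by apply: e3_span => //; rewrite ltnNge; apply: contraNN nf => /Jf ->.
Qed.

Lemma mul3_e3_edge a e : a < e -> len a e = 1%N ->
  mul3 (E a a e) (E a e e) = E a a e + E a e e.
Proof.
move=> ae lae; rewrite mul3_e3_chain ?lexx // (bigD1 a) ?lexx ?(ltW ae) //=.
rewrite (bigD1 e) /= ?lexx ?(ltW ae) ?(gt_eqF ae) // big1 ?addr0 // => x.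
case/andP=> /andP[/andP[ax xe] xa] xe'.
suff: (1 < len a e)%N by rewrite lae.
by apply/len_gt1P; exists x; rewrite !lt_neqAle ax xe eq_sym xa xe'.
Qed.

Lemma Egen_span f : Egen f -> span3 e3_prod f.
Proof.
apply: span3_sub => _ [x [y [xy lxy ->]]].
have nxy : x != y by apply: contra_eqN lxy => /eqP->; rewrite lenxx.
have ltxy : x < y by rewrite lt_neqAle nxy.
rewrite -mul3_e3_edge //; apply: span3_gen; exists x, x, y, y.
by split; first split; rewrite ?lexx.
Qed.

Definition EgenJ2 f : Prop := exists g h, [/\ Egen g, J3 2 h & f = g + h].

Lemma EgenJ2_submod : submod3 EgenJ2.
Proof.
have [E0 ED EZ] := Egen_submod.
have [J0 JD JZ] := J3_submod 2.
split.
- by exists 0, 0; rewrite addr0.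
- move=> _ _ [g1 [h1 [G1 H1 ->]]] [g2 [h2 [G2 H2 ->]]]; exists (g1 + g2), (h1 + h2).
  by split; [exact: ED | exact: JD | rewrite addrACA].
- move=> k _ [g [h [G H ->]]]; exists (k *: g), (k *: h).
  by split; [exact: EZ | exact: JZ | rewrite scalerDr].
Qed.

Lemma e3_prod_EgenJ2 h : e3_prod h -> EgenJ2 h.
Proof.
case=> a [b [c [e [[ab bc ce ac be] ->]]]]; have ae := lt_le_trans ac ce.
have [lae|lae] := ltnP 1 (len a e).
  exists 0, (mul3 (E a b c) (E b c e)); split; rewrite ?add0r //.
    by case: Egen_submod.
  rewrite mul3_e3_chain //; apply: sum_e3_J3 => // x /andP[bx xc].
  by rewrite (le_trans ab bx) (le_trans xc ce).
have no_between u : a < u < e -> False.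
  by move=> aue; move: lae; rewrite leqNgt => /negP; apply; apply/len_gt1P; exists u.
have eba : b = a.
  apply/eqP/negPn/negP => nba; apply: (no_between b).
  by rewrite be andbT lt_neqAle eq_sym nba ab.
have ece : c = e.
  apply/eqP/negPn/negP => nce; apply: (no_between c).
  by rewrite ac lt_neqAle nce ce.
subst b c; exists (mul3 (E a a e) (E a e e)), 0; split; rewrite ?addr0 //.
- have lae1 : len a e = 1%N by apply/eqP; rewrite eqn_leq lae len_gt0.
  by apply: span3_gen; exists a, e; rewrite mul3_e3_edge // (ltW ae).
- by case: (J3_submod 2).
Qed.

Lemma span_e3_prod_EgenJ2 f : span3 e3_prod f -> EgenJ2 f.
Proof. exact: (span3_ind EgenJ2_submod e3_prod_EgenJ2). Qed.

Lemma EgenJ2_span f : EgenJ2 f -> span3 e3_prod f.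
Proof.
case=> g [h [Eg Jh ->]]; have [_ spanD _] := span3_submod e3_prod.
by apply: spanD; [apply: Egen_span | apply: J2_span].
Qed.

Lemma Egen_support f a b c : Egen f -> len a c != 1%N -> f (a, b, c) = 0.
Proof.
move=> Ef lac; move: f Ef; apply: (@span3_ind _ (fun f => f (a, b, c) = 0)).
  by split=> [|f g fz gz|k f fz]; rewrite ffunE ?fz ?gz ?addr0 ?scaler0.
move=> _ [x [y [_ lxy ->]]]; rewrite !ffunE !xpair_eqE.
case: (a =P x) => [ax|_]; case: (c =P y) => [cy|_]; rewrite ?andbF ?addr0 //.
by move: lac; rewrite ax cy lxy.
Qed.

Lemma Egen_J2_trivial f : Egen f -> J3 2 f -> f = 0.
Proof.
move=> Ef [_ Jf]; apply/ffunP => -[[a b] c]; rewrite ffunE.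
have [lac|] := eqVneq (len a c) 1%N; last exact: Egen_support.
by apply: Jf; rewrite lac.
Qed.

Lemma Z2_Z1sq f : Z2 f -> Z1sq f.
Proof.
apply: span3_sub => _ [g [h [Zg [Zh ->]]]].
apply: (submod3B (span3_submod _)); apply: span3_gen; first by exists g, h.
by exists h, g.
Qed.

Lemma Z1sq_span f : Z1sq f -> span3 e3_prod f.
Proof.
by apply: span3_ind => [|_ [g [h [Zg [Zh ->]]]]]; [apply: span3_submod | apply: Z1_mul_span].
Qed.

Lemma span_e3_prod_Z2 f : span3 e3_prod f -> Z2 f.
Proof. by apply: span3_sub => h /e3_prod_Z2. Qed.

Lemma Z2_span f : Z2 f -> span3 e3_prod f.
Proof. by move/Z2_Z1sq/Z1sq_span. Qed.

End Incidence3Algebra.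

Theorem lemma2p5 (d : Order.disp_t) (P : finPOrderType d) (R : comNzRingType) :
  (* Z^3_2 = Z^3_1 ^2 *)
  (forall f : fn3 P R, Z2 f <-> Z1sq f) /\
  (* Z^3_2 = span{e_xxy + e_xyy : l(x,y)=1} + J^3_2 *)
  (forall f : fn3 P R, Z2 f <-> exists a b, [/\ Egen a, J3 2 b & f = (a + b)%R]) /\
  (* the sum is direct *)
  (forall f : fn3 P R, Egen f -> J3 2 f -> f = 0%R) /\
  (* Z^3_2 is a subalgebra: an R-submodule closed under multiplication *)
  (Z2 (0%R : fn3 P R)) /\
  (forall (c : R) (f g : fn3 P R), Z2 f -> Z2 g -> Z2 (c *: f + g)%R) /\
  (forall f g : fn3 P R, Z2 f -> Z2 g -> Z2 (mul3 f g)).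
Proof.
have [Z2_0 Z2D Z2Z] := @Z2_submod d P R.
split; [|split; [|split; [|split; [|split]]]].
- by move=> f; split=> [/Z2_Z1sq | /Z1sq_span/span_e3_prod_Z2].
- by move=> f; split=> [/Z2_span/span_e3_prod_EgenJ2 | /EgenJ2_span/span_e3_prod_Z2].
- exact: Egen_J2_trivial.
- exact: Z2_0.
- by move=> c f g Zf Zg; apply/Z2D/Zg/Z2Z.
- move=> f g /Z2_span/span_e3_prod_Z1 Zf /Z2_span/span_e3_prod_Z1 Zg.
  exact/span_e3_prod_Z2/Z1_mul_span.
Qed.
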